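(* Let $R$ be a Bézout domain and let $A,B,C\in R^{n\times n}$ satisfy $ABA=ACA$. If $AB$ is Drazin invertible, then there exists $k\in\mathbb{N}$ such that $(AB)^s$ is similar to $(CA)^s$ for every integer $s\geq k$.
   Context: A Bézout domain is an integral domain in which every finitely generated ideal is principal. A matrix $M\in R^{n\times n}$ is Drazin invertible if there exists $X\in R^{n\times n}$ with $MX=XM$, $XMX=X$ and $M^{m+1}X=M^m$ for some nonnegative integer $m$; such $X$ is unique and denoted $M^D$. Two matrices $M,N\in R^{n\times n}$ are similar if $M=S^{-1}NS$ for some invertible $S\in R^{n\times n}$. *)

From HB Require Import structures.
From mathcomp Require Import all_boot all_order all_algebra.
Set Implicit Arguments. Unset Strict Implicit. Unset Printing Implicit Defensive.
Import GRing.Theory.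
Local Open Scope ring_scope.

Definition in_fg_ideal (R : comRingType) (s : seq R) (x : R) : Prop :=
  exists c : seq R, size c = size s /\ x = \sum_(i < size s) c`_i * s`_i.

Definition bezout_domain (R : idomainType) : Prop :=
  forall s : seq R, exists d : R,
    forall x : R, in_fg_ideal s x <-> exists r : R, x = r * d.

Definition drazin_inverse (R : comRingType) (n : nat) (M X : 'M[R]_n) : Prop :=
  [/\ M *m X = X *m M, X *m M *m X = X &
      exists m : nat, M ^+ m.+1 *m X = M ^+ m].

Definition drazin_invertible (R : comRingType) (n : nat) (M : 'M[R]_n) : Prop :=
  exists X : 'M[R]_n, drazin_inverse M X.

Definition similar_mx (R : comUnitRingType) (n : nat) (M N : 'M[R]_n) : Prop :=
  exists S : 'M[R]_n, S \in unitmx /\ M = invmx S *m N *m S.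

From mathcomp Require Import all_boot all_order all_algebra.
From mathcomp Require Import ring fraction.
Set Implicit Arguments. Unset Strict Implicit. Unset Printing Implicit Defensive.
Import GRing.Theory.
Local Open Scope ring_scope.

(* Put M = AB, N = CA and let X be the Drazin inverse of M. Then v = CX is an
   outer inverse of A (vAv = v), so Av and vA are idempotents, and for s beyond
   the index M^s A = A N^s, M^s A v = M^s and v A N^s = N^s. Over a Bezout
   domain every idempotent matrix is similar to some pid_mx r, with r its rank
   over the fraction field; as Av and vA have the same rank, their complements
   are equivalent: W W' = 1 - Av and W' W = 1 - vA. The matrix
   S = AvA + (1 - Av) W (1 - vA) is then invertible and M^s S = S N^s. *)

Section RingLemmas.
Variable T : pzRingType.
Implicit Types a v w x y e f : T.

Lemma intertwineX x a y k : x * a = a * y -> x ^+ k * a = a * y ^+ k.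
Proof.
move=> xay; elim: k => [|k IHk]; first by rewrite !expr0 mul1r mulr1.
by rewrite exprS -mulrA IHk !mulrA xay -mulrA -exprS.
Qed.

Lemma absorbing_idem_conj e f : e * f = f -> f * e = e ->
  exists u u', u' * u = 1 /\ f = u' * e * u.
Proof.
move=> ef fe; have ee : e * e = e by rewrite -{2}fe mulrA ef fe.
have ff : f * f = f by rewrite -{2}ef mulrA fe ef.
have eN : e * (f - e) = f - e by rewrite mulrBr ef ee.
have Ne : (f - e) * e = 0 by rewrite mulrBl fe ee subrr.
have N2 : (f - e) * (f - e) = 0 by rewrite mulrBr Ne subr0 mulrBl ff ef subrr.
exists (1 + (f - e)), (1 - (f - e)); split.
  by rewrite mulrDr mulr1 mulrBl mul1r N2 subr0 subrK.
by rewrite mulrBl mul1r Ne subr0 mulrDr mulr1 eN addrC subrK.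
Qed.

Section OuterInverse.
Variables a v : T.
Hypothesis vav : v * a * v = v.

Lemma outer_idem_av : a * v * (a * v) = a * v.
Proof. by rewrite -mulrA (mulrA v) vav. Qed.

Lemma outer_idem_va : v * a * (v * a) = v * a.
Proof. by rewrite mulrA vav. Qed.

Variables w w' : T.
Hypotheses (ww' : w * w' = 1 - a * v) (w'w : w' * w = 1 - v * a).

Definition outer_conj := a * v * a + (1 - a * v) * w * (1 - v * a).
Definition outer_conj_inv := v + (1 - v * a) * w' * (1 - a * v).

Lemma outer_conjV : outer_conj * outer_conj_inv = 1.
Proof.
have compl_idem e : e * e = e -> (1 - e) * (1 - e) = 1 - e.
  by move=> ee; rewrite mulrBr mulr1 mulrBl mul1r ee subrr subr0.
have ava_va : a * v * a * (1 - v * a) = 0.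
  by rewrite mulrBr mulr1 !mulrA -[a * v * a * v]mulrA outer_idem_av subrr.
have va_v : (1 - v * a) * v = 0 by rewrite mulrBl mul1r vav subrr.
have w_va : w * (1 - v * a) = (1 - a * v) * w by rewrite -w'w -ww' mulrA.
rewrite /outer_conj /outer_conj_inv mulrDl (mulrDr (a * v * a)).
rewrite (mulrDr ((1 - a * v) * w * (1 - v * a))) !mulrA.
rewrite -[a * v * a * v]mulrA outer_idem_av ava_va !mul0r addr0.
rewrite -(mulrA _ (1 - v * a) v) va_v mulr0 add0r.
rewrite -(mulrA _ (1 - v * a) (1 - v * a)) compl_idem ?outer_idem_va //.
rewrite -(mulrA _ w) w_va mulrA -(mulrA _ w w') ww'.
by rewrite !compl_idem ?outer_idem_av // addrC subrK.
Qed.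

Lemma outer_conj_intertwine x y : x * a = a * y ->
  x * a * v = x -> v * a * y = y -> x * outer_conj = outer_conj * y.
Proof.
move=> xay xav vay; rewrite /outer_conj mulrDr [RHS]mulrDl !mulrA xav.
rewrite (mulrBr x) mulr1 mulrA xav subrr !mul0r addr0.
rewrite -(mulrA _ (1 - v * a)) (mulrBl y) mul1r vay subrr mulr0 addr0.
by rewrite xay -(mulrA a) -(mulrA a) vay.
Qed.

End OuterInverse.

Section DrazinProduct.
Variables (a b c x : T) (m : nat).
Hypotheses (abaE : a * b * a = a * c * a) (ab_x : a * b * x = x * (a * b)).
Hypotheses (xabx : x * (a * b) * x = x) (ab_index : (a * b) ^+ m.+1 * x = (a * b) ^+ m).

Lemma drazin_exprS k : (m <= k)%N -> (a * b) ^+ k.+1 * x = (a * b) ^+ k.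
Proof.
move=> /subnK <-; elim: (k - m)%N => [|j IHj] //.
by rewrite addSn exprS -mulrA IHj -exprS.
Qed.

Lemma ab_expr_a k : (a * b) ^+ k * a = a * (c * a) ^+ k.
Proof. by apply: intertwineX; rewrite mulrA abaE. Qed.

Lemma drazin_acx : a * c * x = a * b * x.
Proof.
have x_ab_xx : x = a * b * (x * x) by rewrite mulrA ab_x xabx.
by rewrite {1}x_ab_xx !mulrA -abaE {3}x_ab_xx !mulrA.
Qed.

Lemma drazin_outer : c * x * a * (c * x) = c * x.
Proof. by rewrite -!mulrA (mulrA a c x) drazin_acx (mulrA x (a * b)) xabx. Qed.

Lemma ab_expr_outer k : (m <= k)%N -> (a * b) ^+ k * a * (c * x) = (a * b) ^+ k.
Proof. by move=> mk; rewrite -mulrA (mulrA a c) drazin_acx mulrA -exprSr drazin_exprS. Qed.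

Lemma ca_expr_outer k : (m < k)%N -> c * x * a * (c * a) ^+ k = (c * a) ^+ k.
Proof.
case: k => // k mk; have ca_exprS j : (c * a) ^+ j.+1 = c * ((a * b) ^+ j * a).
  by rewrite ab_expr_a mulrA -exprS.
by rewrite -!mulrA -ab_expr_a (mulrA x) (commrX k.+1 (esym ab_x)) drazin_exprS // ca_exprS.
Qed.

End DrazinProduct.
End RingLemmas.

Section SimilarMx.
Variables (R : comUnitRingType) (n : nat).
Implicit Types M N S e P Q : 'M[R]_n.

Lemma similar_mx_conj M N S S' : S' *m S = 1%:M -> M = S' *m N *m S -> similar_mx M N.
Proof.
move=> S'S ->; have [_ uS] := mulmx1_unit S'S.
exists S; split => //; suff -> : invmx S = S' by [].
by rewrite -[S'](mulmxK uS) S'S mul1mx.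
Qed.

Lemma similar_idem_compl e P Q : e *m e = e -> similar_mx P e -> similar_mx Q e ->
  exists W W', W *m W' = 1%:M - P /\ W' *m W = 1%:M - Q.
Proof.
move=> ee [V [uV ->]] [V' [uV' ->]].
have ce : (1%:M - e) *m (1%:M - e) = 1%:M - e.
  by rewrite mulmxBr mulmx1 mulmxBl mul1mx ee subrr subr0.
have compl X Y : X \in unitmx -> Y \in unitmx ->
    invmx Y *m (1%:M - e) *m X *m (invmx X *m (1%:M - e) *m Y) = 1%:M - invmx Y *m e *m Y.
  move=> uX uY; rewrite !mulmxA mulmxK // -(mulmxA (invmx Y)) ce.
  by rewrite mulmxBr mulmx1 mulmxBl mulVmx.
by exists (invmx V *m (1%:M - e) *m V'), (invmx V' *m (1%:M - e) *m V); rewrite !compl.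
Qed.

End SimilarMx.

Section FractionRank.
Variable R : idomainType.
Local Notation fm := (map_mx (@tofrac R)).

Lemma mxrank_frac_mul3 n (X Y Z : 'M[R]_n) : (\rank (fm (X *m Y *m Z)) <= \rank (fm Y))%N.
Proof. by rewrite !map_mxM (leq_trans (mxrankM_maxl _ _)) ?mxrankM_maxr. Qed.

Lemma mxrank_frac_similar_pid n r (E : 'M[R]_n) :
  (r <= n)%N -> similar_mx E (pid_mx r) -> \rank (fm E) = r.
Proof.
move=> rn [V [uV EV]]; have rank_pid : \rank (fm (pid_mx r : 'M_n)) = r.
  by rewrite map_pid_mx rank_pid_mx.
have pidE : pid_mx r = V *m E *m invmx V by rewrite EV !mulmxA mulmxV // mul1mx mulmxK.
apply/eqP; rewrite eqn_leq; apply/andP; split.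
  by rewrite -{1}rank_pid EV; apply: mxrank_frac_mul3.
by rewrite -{1}rank_pid pidE; apply: mxrank_frac_mul3.
Qed.

Lemma mxrank_frac_outer n (a v : 'M[R]_n) :
  v *m a *m v = v -> \rank (fm (a *m v)) = \rank (fm (v *m a)).
Proof.
move=> vav; apply/eqP; rewrite eqn_leq; apply/andP; split.
  by rewrite -{1}vav !mulmxA -(mulmxA a); apply: mxrank_frac_mul3.
by rewrite -{1}vav -(mulmxA v); apply: mxrank_frac_mul3.
Qed.

End FractionRank.

Section TwoRowMatrix.
Variable R : comPzRingType.

Definition mx2_on m (i j : 'I_m) (p q r s : R) : 'M[R]_m :=
  \matrix_(k, l) if k == i then (if l == i then p else if l == j then q else 0)
                 else if k == j then (if l == i then r else if l == j then s else 0)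
                 else (k == l)%:R.

Variables (m : nat) (i j : 'I_m).
Hypothesis nij : i != j.

Lemma mx2_onE n p q r s (B : 'M[R]_(m, n)) k l :
  (mx2_on i j p q r s *m B) k l =
  if k == i then p * B i l + q * B j l
  else if k == j then r * B i l + s * B j l else B k l.
Proof.
rewrite mxE; have sum_ij a b : \sum_t (if t == i then a else if t == j then b else 0) * B t l
    = a * B i l + b * B j l.
  rewrite (bigD1 i) //= eqxx (bigD1 j) /=; last by rewrite eq_sym.
  rewrite eq_sym (negPf nij) eqxx big1 ?addr0 // => t /andP[ti tj].
  by rewrite (negPf ti) (negPf tj) mul0r.
case: eqVneq => [->|ki]; first by rewrite -sum_ij; apply: eq_bigr => t _; rewrite !mxE eqxx.
case: eqVneq => [->|kj].
  by rewrite -sum_ij; apply: eq_bigr => t _; rewrite !mxE eqxx eq_sym (negPf nij).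
rewrite (bigD1 k) //= !mxE (negPf ki) (negPf kj) eqxx mul1r big1 ?addr0 // => t tk.
by rewrite !mxE (negPf ki) (negPf kj) eq_sym (negPf tk) mul0r.
Qed.

Lemma mx2_onM p q r s p' q' r' s' :
  mx2_on i j p q r s *m mx2_on i j p' q' r' s' =
  mx2_on i j (p * p' + q * r') (p * q' + q * s') (r * p' + s * r') (r * q' + s * s').
Proof.
apply/matrixP => k l; rewrite mx2_onE !mxE !eqxx (eq_sym j i) (negPf nij).
by case: eqVneq => [_|_]; [|case: eqVneq => [_|//]];
  (case: eqVneq => [_|_]; [|case: eqVneq => [_|_]]); ring.
Qed.

Lemma mx2_on1 : mx2_on i j 1 0 0 1 = 1%:M.
Proof.
apply/matrixP => k l; rewrite !mxE.
case: (eqVneq k i) => [->|ki].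
  by case: (eqVneq l i) => [_|_]; rewrite ?if_same.
case: (eqVneq k j) => [->|//]; case: (eqVneq l i) => [->|_]; last by case: eqVneq.
by rewrite eq_sym (negPf nij).
Qed.

End TwoRowMatrix.

Lemma pid_mxS_block (R : pzSemiRingType) m n r :
  pid_mx (1 + r) = block_mx 1%:M 0 0 (pid_mx r) :> 'M[R]_(1 + m, 1 + n).
Proof.
apply/matrixP=> i j; rewrite !mxE.
by do ![case: split_ordP => ? -> /[!mxE]//]; rewrite ?ord1.
Qed.

Section BezoutDomain.
Variable R : idomainType.
Hypothesis HR : bezout_domain R.

Lemma bezout_pair (a b : R) : exists d x y a' b' : R,
  [/\ a = a' * d, b = b' * d & d = x * a + y * b].
Proof.
have [d Hd] := HR [:: a; b].
have [c [_ dE]] : in_fg_ideal [:: a; b] d by apply/Hd; exists 1; rewrite mul1r.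
have [a' ea] : exists r, a = r * d.
  by apply/Hd; exists [:: 1; 0]; split => //; rewrite !big_ord_recl big_ord0 /=; ring.
have [b' eb] : exists r, b = r * d.
  by apply/Hd; exists [:: 0; 1]; split => //; rewrite !big_ord_recl big_ord0 /=; ring.
exists d, c`_0, c`_1, a', b'.
by split => //; rewrite dE !big_ord_recl big_ord0 /= addr0.
Qed.

Lemma bezout_clear_entry m (c : 'cV[R]_m) (i j : 'I_m) : i != j ->
  exists2 U : 'M_m, U \in unitmx &
    (U *m c) j 0 = 0 /\ forall k, k != i -> k != j -> (U *m c) k 0 = c k 0.
Proof.
move=> nij; have [d [x [y [a' [b' [ea eb ed]]]]]] := bezout_pair (c i 0) (c j 0).
have [d0|dn0] := eqVneq d 0.
  by exists 1%:M; rewrite ?unitmx1 // mul1mx eb d0 mulr0.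
have e1 : x * a' + y * b' = 1.
  by apply: (mulIf dn0); rewrite mul1r {2}ed ea eb; ring.
exists (mx2_on i j x y (- b') a'); last first.
  split; last by move=> k ki kj; rewrite mx2_onE // (negPf ki) (negPf kj).
  by rewrite mx2_onE // (eq_sym j i) (negPf nij) eqxx ea eb; ring.
suff /mulmx1_unit[] : mx2_on i j x y (- b') a' *m mx2_on i j a' (- y) b' x = 1%:M by [].
rewrite mx2_onM // -(mx2_on1 R nij) -e1.
by congr mx2_on; ring.
Qed.

Lemma bezout_col_reduce m (c : 'cV[R]_m.+1) :
  exists2 U : 'M_m.+1, U \in unitmx & forall k, k != 0 -> (U *m c) k 0 = 0.
Proof.
suff reduce_upto t : exists2 U : 'M_m.+1, U \in unitmx &
    forall k : 'I_m.+1, (0 < k <= t)%N -> (U *m c) k 0 = 0.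
  have [U uU Uc] := reduce_upto m.
  exists U => // k k0; apply: Uc; rewrite -[(k <= m)%N]ltnS ltn_ord andbT.
  by move: k0; rewrite -val_eqE /= lt0n.
elim: t => [|t [U uU Uc]].
  by exists 1%:M; rewrite ?unitmx1 // => k /andP[]; rewrite ltnNge => /negPf->.
have [tm|mt] := ltnP t.+1 m.+1; last first.
  by exists U => // k /andP[k0 kt]; apply: Uc; rewrite k0 -ltnS (leq_trans (ltn_ord k)).
have j0 : (0 : 'I_m.+1) != Ordinal tm by [].
have [U' uU' [U'c_j U'c]] := bezout_clear_entry (U *m c) j0.
exists (U' *m U) => [|k /andP[k0]]; first by rewrite unitmx_mul uU' uU.
rewrite -mulmxA leq_eqVlt ltnS => /predU1P[kt|kt].
  by have -> : k = Ordinal tm by apply: val_inj.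
rewrite U'c ?Uc ?k0 // -val_eqE /=; first by rewrite -lt0n.
by rewrite neq_ltn ltnS kt.
Qed.

Definition top_free_rows m n r (G : 'M[R]_(m, n)) :=
  [/\ (r <= m)%N, pid_mx r *m G = G &
      forall p (Z : 'M_(p, m)), Z *m pid_mx r *m G = 0 -> Z *m (pid_mx r : 'M_m) = 0].

Lemma top_free_rows0 m n : top_free_rows 0 (0 : 'M_(m, n)).
Proof. by split => // [|p Z _]; rewrite ?pid_mx_0 mulmx0. Qed.

Lemma top_free_rows_row0 m n r (G : 'M_(m, n)) :
  top_free_rows r G -> top_free_rows r (row_mx (0 : 'cV_m) G).
Proof.
case=> rm pG Gfree; split; rewrite // ?mul_mx_row ?mulmx0 ?pG // => p Z.
by rewrite mul_mx_row mulmx0 -row_mx0 => /eq_row_mx[_ /Gfree].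
Qed.

Lemma top_free_rows_block m n r (g : 'M_1) (u : 'rV_n) (G : 'M_(m, n)) :
  g 0 0 != 0 -> top_free_rows r G -> top_free_rows (1 + r) (block_mx g u 0 G).
Proof.
move=> g0 [rm pG Gfree]; split; first by rewrite leq_add2l.
  by rewrite pid_mxS_block mulmx_block !mul1mx !mul0mx !mulmx0 !addr0 !add0r pG.
move=> p Z; rewrite pid_mxS_block -[Z]hsubmxK !mul_row_block.
rewrite !mulmx0 !mulmx1 !addr0 !add0r -row_mx0 => /eq_row_mx[Zl_g Zr_G].
have Zl0 : lsubmx Z = 0.
  by move/eqP: Zl_g; rewrite [g]mx11_scalar mul_mx_scalar scalemx_eq0 (negPf g0) => /eqP.
by move: Zr_G; rewrite Zl0 mul0mx add0r => /Gfree->; rewrite row_mx0.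
Qed.

Lemma bezout_row_reduce n : forall m (E : 'M[R]_(m, n)),
  exists U r, U \in unitmx /\ top_free_rows r (U *m E).
Proof.
have reduce0 m n' (E : 'M[R]_(m, n')) :
    E = 0 -> exists U r, U \in unitmx /\ top_free_rows r (U *m E).
  by move->; exists 1%:M, 0%N; rewrite unitmx1 mulmx0; split => //; apply: top_free_rows0.
elim: n => [|n IH] [|m] E; try by apply: reduce0; rewrite ?thinmx0 ?flatmx0.
move: E; rewrite -[m.+1]/(1 + m)%N -[n.+1]/(1 + n)%N => E.
have [c0|cn0] := eqVneq (lsubmx E) 0.
  have [U [r [uU Ufree]]] := IH _ (rsubmx E).
  exists U, r; split; rewrite // -[E]hsubmxK c0 mul_mx_row mulmx0.
  exact: top_free_rows_row0.
have [U0 uU0 U0c] := bezout_col_reduce (lsubmx E).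
pose G : 'M_(1 + m, 1 + n) := U0 *m E.
have dlG : dlsubmx G = 0.
  apply/matrixP => i j; rewrite ord1 [RHS]mxE -(U0c (rshift 1 i)); last by rewrite -val_eqE.
  by rewrite mulmx_lsub !mxE.
have g0 : ulsubmx G 0 0 != 0.
  apply: contra cn0 => /eqP g00; apply/eqP.
  suff : U0 *m lsubmx E = 0 by move/(congr1 (mulmx (invmx U0))); rewrite mulKmx // mulmx0.
  apply/matrixP => i j; rewrite ord1 [RHS]mxE; have [->|i0] := eqVneq i 0; last exact: U0c.
  by rewrite mulmx_lsub -g00 !mxE (_ : lshift m 0 = 0 :> 'I_(1 + m)) //; apply: val_inj.
have [U2 [r [uU2 U2free]]] := IH _ (drsubmx G).
exists (block_mx (1%:M : 'M_1) 0 0 U2 *m U0), (1 + r)%N; split.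
  by rewrite unitmx_mul uU0 andbT unitmxE det_ublock det1 mul1r -unitmxE.
rewrite -mulmxA -/G -[G]submxK dlG mulmx_block !mul1mx !mul0mx !mulmx0 !addr0 !add0r.
exact: top_free_rows_block.
Qed.

Lemma bezout_idem_similar_pid n (E : 'M[R]_n) :
  E *m E = E -> exists2 r, (r <= n)%N & similar_mx E (pid_mx r).
Proof.
move=> EE; have [U [r [uU [rn pG Gfree]]]] := bezout_row_reduce E.
pose K := U *m E *m invmx U.
have pK : pid_mx r *m K = K by rewrite /K mulmxA pG.
have KUE : K *m (U *m E) = U *m E by rewrite /K -!mulmxA mulKmx // EE.
(* K pid - pid annihilates the top rows of U E, which are free. *)
have Kp : K *m pid_mx r = pid_mx r :> 'M_n.
  have : (K *m pid_mx r - pid_mx r) *m (pid_mx r : 'M_n) *m (U *m E) = 0.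
    by rewrite -mulmxA pG mulmxBl -mulmxA pG KUE subrr.
  move=> /Gfree; rewrite mulmxBl -mulmxA pid_mx_id // => /eqP.
  by rewrite subr_eq0 => /eqP.
have [S [S' [S'S KE]]] := absorbing_idem_conj pK Kp.
exists r => //; apply: (@similar_mx_conj _ _ _ _ (S *m U) (invmx U *m S')).
  by rewrite mulmxA -(mulmxA _ S') mulmxE S'S -mulmxE mulmx1 mulVmx.
by rewrite -[E](mulKmx uU) -[U *m E](mulmxKV uU) -/K KE -!mulmxE !mulmxA.
Qed.

Lemma bezout_outer_compl_equiv n (a v : 'M[R]_n) : v *m a *m v = v ->
  exists W W', W *m W' = 1%:M - a *m v /\ W' *m W = 1%:M - v *m a.
Proof.
move=> vav; have vav' : v * a * v = v by rewrite -!mulmxE.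
have [rP rPn simP] := bezout_idem_similar_pid (outer_idem_av vav').
have [rQ rQn simQ] := bezout_idem_similar_pid (outer_idem_va vav').
have erPQ : rP = rQ.
  rewrite -(mxrank_frac_similar_pid rPn simP) -(mxrank_frac_similar_pid rQn simQ).
  exact: mxrank_frac_outer.
by subst rQ; apply: similar_idem_compl simP simQ; rewrite pid_mx_id.
Qed.

Lemma bezout_outer_similar n (a v x y : 'M[R]_n) : v *m a *m v = v ->
  x *m a = a *m y -> x *m a *m v = x -> v *m a *m y = y -> similar_mx x y.
Proof.
rewrite !mulmxE => vav xay xav vay.
have [W [W' [WW' W'W]]] := bezout_outer_compl_equiv (a := a) (v := v) vav.
rewrite !mulmxE idmxE in WW' W'W.
have sV := outer_conjV vav WW' W'W.
have s_xy := outer_conj_intertwine W xay xav vay.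
apply: (similar_mx_conj (S := outer_conj_inv a v W') (S' := outer_conj a v W)).
  by rewrite mulmxE sV idmxE.
by rewrite !mulmxE -s_xy -mulrA sV mulr1.
Qed.

End BezoutDomain.

Theorem theorem3p4 (R : idomainType) (HR : bezout_domain R) (n : nat)
  (A B C : 'M[R]_n) :
  A *m B *m A = A *m C *m A ->
  drazin_invertible (A *m B) ->
  exists k : nat, forall s : nat, (k <= s)%N ->
    similar_mx ((A *m B) ^+ s) ((C *m A) ^+ s).
Proof.
move=> abaE [X [abX Xab_X [m ab_index]]]; exists m.+1 => s ms.
rewrite !mulmxE in abaE abX Xab_X ab_index.
apply: (bezout_outer_similar HR (a := A) (v := C *m X)); rewrite !mulmxE.
- exact: drazin_outer abaE abX Xab_X.
- exact: ab_expr_a.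
- exact: (ab_expr_outer abaE abX Xab_X ab_index (ltnW ms)).
- exact: (ca_expr_outer abaE abX ab_index ms).
Qed.
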